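(* For classes $[\mathcal{K}],[\mathcal{J}]\in\mathbb{P}(\mathcal{C})$: (1) $\Delta([\mathcal{K}],[\mathcal{J}])=1$ if and only if $\delta([\mathcal{K}],[\mathcal{J}])=1$; (2) if $\delta([\mathcal{K}],[\mathcal{J}])=2$, then $\Delta([\mathcal{K}],[\mathcal{J}])=2$.
   Context: $\mathcal{C}$ is the smooth knot concordance group; $d(\mathcal{K},\mathcal{J})=g_4(\mathcal{K}\,\#\,-\mathcal{J})$, $g_4$ the smooth four-genus. Let $\mathcal{C}^\circ=\mathcal{C}\setminus\{0\}$; $\mathcal{K}\sim'\mathcal{J}$ if there exist $\mathcal{M}\in\mathcal{C}$ and $r,s\in\mathbb{Z}$ with $\mathcal{K}=r\mathcal{M}$, $\mathcal{J}=s\mathcal{M}$; $\sim$ is the equivalence relation generated by $\sim'$; $\mathbb{P}(\mathcal{C})=\mathcal{C}^\circ/\sim$. Define $\delta([\mathcal{K}],[\mathcal{J}])=\min\{d(\mathcal{K}',\mathcal{J}'):\mathcal{K}'\in[\mathcal{K}],\mathcal{J}'\in[\mathcal{J}]\}$ and $\Delta([\mathcal{K}],[\mathcal{J}])=\min\sum_{i=0}^{n-1}\delta([\mathcal{K}_i],[\mathcal{K}_{i+1}])$ over all finite sequences of classes with $[\mathcal{K}_0]=[\mathcal{K}]$, $[\mathcal{K}_n]=[\mathcal{J}]$. *)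

From HB Require Import structures.
From mathcomp Require Import all_boot all_order all_algebra.
From mathcomp Require Import boolp.
From Stdlib Require Import Relations.
Set Implicit Arguments. Unset Strict Implicit. Unset Printing Implicit Defensive.
Import GRing.Theory.
Local Open Scope ring_scope.

Section ProjConc.
Variables (C : zmodType) (g4 : C -> nat).

(* d(K,J) = g4(K # -J) *)
Definition dist (K J : C) : nat := g4 (K - J).

Definition sim' (K J : C) : Prop :=
  exists (M : C) (r s : int), K = M *~ r /\ J = M *~ s.

Definition sim'_nz (K J : C) : Prop := K != 0 /\ J != 0 /\ sim' K J.
Definition sim (K J : C) : Prop :=
  K != 0 /\ J != 0 /\ clos_refl_sym_trans C sim'_nz K J.

(* a classical minimum of a set of naturals (0 if empty; never empty below) *)
Definition natmin (P : nat -> Prop) : nat :=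
  match pselect (exists n, P n) with
  | left ex => ex_minn (P := fun n => `[< P n >]) (let: ex_intro n Pn := ex in ex_intro _ n (asboolT Pn))
  | right _ => 0%N
  end.

Definition delta (K J : C) : nat :=
  natmin (fun n => exists K' J', sim K K' /\ sim J J' /\ n = dist K' J').

(* Delta([K],[J]) = min over finite sequences of classes [K_0]=[K], ..., [K_n]=[J]
   of sum_i delta([K_i],[K_{i+1}]); a sequence of classes is given by
   representatives K0 :: ks, all in C°. *)
Definition Delta (K J : C) : nat :=
  natmin (fun m => exists (K0 : C) (ks : seq C),
    sim K K0 /\ (forall x, x \in ks -> x != 0) /\ sim (last K0 ks) J /\
    m = sumn (pairmap delta K0 ks)).

End ProjConc.

(* Delta is at most delta (use the one-step chain), so it suffices to show
   that Delta detects the values 0 and 1 of delta.  A step of a chain with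
   delta = 0 joins equivalent classes, because g4 vanishes only at 0; hence a
   chain of total length 0 joins equivalent classes, and a chain of total
   length 1 consists of zero-steps around a single step of delta = 1, which by
   class invariance of delta gives delta([K],[J]) = 1. *)
From HB Require Import structures.
From mathcomp Require Import all_boot all_order all_algebra.
From mathcomp Require Import boolp.
From Stdlib Require Import Relations.
Set Implicit Arguments. Unset Strict Implicit. Unset Printing Implicit Defensive.
Import GRing.Theory.
Local Open Scope ring_scope.

Lemma natmin_leq (P : nat -> Prop) (m : nat) : P m -> (natmin P <= m)%N.
Proof.
move=> Pm; rewrite /natmin; case: pselect => [ex|//].
by case: ex_minnP => n _; apply; apply: asboolT.
Qed.

Lemma natmin_holds (P : nat -> Prop) : (exists n, P n) -> P (natmin P).
Proof.
move=> ex; rewrite /natmin; case: pselect => [ex'|nex]; last by case: (nex ex).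
by case: ex_minnP => n /asboolP.
Qed.

Section Sim.
Variable C : zmodType.

Lemma sim_refl (a : C) : a != 0 -> sim a a.
Proof. by move=> a0; do 2?split => //; apply: rst_refl. Qed.

Lemma sim_sym (a b : C) : sim a b -> sim b a.
Proof. by case=> a0 [b0 ab]; do 2?split => //; apply: rst_sym. Qed.

Lemma sim_trans (a b c : C) : sim a b -> sim b c -> sim a c.
Proof. by case=> a0 [_ ab] [_ [c0 bc]]; do 2?split => //; apply: rst_trans ab bc. Qed.

Lemma sim_neq0r (a b : C) : sim a b -> b != 0.
Proof. by case=> _ []. Qed.

End Sim.

Section Delta.
Variables (C : zmodType) (g4 : C -> nat).
Hypothesis g4_eq0 : forall x : C, g4 x = 0%N <-> x = 0.

Lemma delta_sim (a a' b b' : C) :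
  sim a a' -> sim b b' -> delta g4 a b = delta g4 a' b'.
Proof.
move=> aa' bb'; rewrite /delta; congr natmin; apply/funext => n; apply/propext.
split=> -[K' [J' [aK' [bJ' ->]]]]; exists K', J'.
  by split; [apply: sim_trans (sim_sym aa') aK' | split; [apply: sim_trans (sim_sym bb') bJ' |]].
by split; [apply: sim_trans aa' aK' | split; [apply: sim_trans bb' bJ' |]].
Qed.

Lemma delta_eq0 (a b : C) : a != 0 -> b != 0 -> delta g4 a b = 0%N <-> sim a b.
Proof.
move=> a0 b0; split=> [d0|ab].
  have ex : exists n, exists K' J', sim a K' /\ sim b J' /\ n = dist g4 K' J'.
    by exists (dist g4 a b), a, b; split; [|split]; [apply: sim_refl..|].
  have [K' [J' [aK' [bJ' /esym dK'J']]]] := natmin_holds ex.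
  move: dK'J'; rewrite -/(delta g4 a b) d0 => /g4_eq0/eqP; rewrite subr_eq0 => /eqP eK'J'.
  by rewrite eK'J' in aK'; apply: sim_trans aK' (sim_sym bJ').
apply/eqP; rewrite -leqn0; apply: (@natmin_leq _ 0%N).
exists b, b; split; [exact: ab | split; [exact: sim_refl |]].
by rewrite /dist subrr; apply/esym/g4_eq0.
Qed.

Lemma chain_sum0_sim (K0 : C) (ks : seq C) :
  K0 != 0 -> (forall x, x \in ks -> x != 0) ->
  sumn (pairmap (delta g4) K0 ks) = 0%N -> sim K0 (last K0 ks).
Proof.
elim: ks K0 => [|x ks IH] K0 K00 ks0 /=; first by move=> _; apply: sim_refl.
have x0 : x != 0 by apply: ks0; rewrite inE eqxx.
have ks0' : forall y, y \in ks -> y != 0 by move=> y ys; apply: ks0; rewrite inE ys orbT.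
move=> /eqP; rewrite addn_eq0 => /andP[/eqP /(delta_eq0 K00 x0) K0x /eqP sum0].
exact: sim_trans K0x (IH _ x0 ks0' sum0).
Qed.

Lemma chain_sum1_delta1 (K0 : C) (ks : seq C) :
  K0 != 0 -> (forall x, x \in ks -> x != 0) ->
  sumn (pairmap (delta g4) K0 ks) = 1%N -> delta g4 K0 (last K0 ks) = 1%N.
Proof.
elim: ks K0 => [|x ks IH] K0 K00 ks0 //=.
have x0 : x != 0 by apply: ks0; rewrite inE eqxx.
have ks0' : forall y, y \in ks -> y != 0 by move=> y ys; apply: ks0; rewrite inE ys orbT.
have last0 : last x ks != 0 by move: (mem_last x ks); rewrite inE => /orP[/eqP ->|/ks0'].
case dK0x: (delta g4 K0 x) => [|[|//]] /=.
- rewrite add0n => /(IH _ x0 ks0') <-; apply: delta_sim _ (sim_refl last0).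
  exact/(delta_eq0 K00 x0).
- move=> /eqP; rewrite add1n eqSS => /eqP /(chain_sum0_sim x0 ks0') xlast.
  by rewrite -dK0x; apply: delta_sim (sim_refl K00) (sim_sym xlast).
Qed.

Variables (K J : C).
Hypotheses (HK : K != 0) (HJ : J != 0).

Definition chain_length (m : nat) : Prop := exists (K0 : C) (ks : seq C),
  sim K K0 /\ (forall x, x \in ks -> x != 0) /\ sim (last K0 ks) J /\
  m = sumn (pairmap (delta g4) K0 ks).

Lemma one_step_chain : chain_length (delta g4 K J).
Proof.
exists K, [:: J]; split; [exact: sim_refl | split; [| split; [exact: sim_refl |]]].
  by move=> x; rewrite inE => /eqP ->.
by rewrite /= addn0.
Qed.

Lemma Delta_leq_delta : (Delta g4 K J <= delta g4 K J)%N.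
Proof. exact: (natmin_leq one_step_chain). Qed.

Lemma Delta_chain : chain_length (Delta g4 K J).
Proof. exact: (natmin_holds (ex_intro _ _ one_step_chain)). Qed.

Lemma Delta_eq0 : Delta g4 K J = 0%N -> delta g4 K J = 0%N.
Proof.
have [K0 [ks [KK0 [ks0 [lastJ ->]]]]] := Delta_chain.
move=> /(chain_sum0_sim (sim_neq0r KK0) ks0) K0last.
by apply/(delta_eq0 HK HJ); apply: sim_trans KK0 (sim_trans K0last lastJ).
Qed.

Lemma Delta_eq1 : Delta g4 K J = 1%N -> delta g4 K J = 1%N.
Proof.
have [K0 [ks [KK0 [ks0 [lastJ ->]]]]] := Delta_chain.
move=> /(chain_sum1_delta1 (sim_neq0r KK0) ks0) <-.
exact: delta_sim KK0 (sim_sym lastJ).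
Qed.

Lemma Delta_eq_delta_leq2 : (delta g4 K J <= 2)%N -> Delta g4 K J = delta g4 K J.
Proof.
move=> delta_le2; have := Delta_leq_delta.
case DeltaE: (Delta g4 K J) => [|[|n]] Delta_le.
- by rewrite Delta_eq0.
- by rewrite Delta_eq1.
- by apply/anti_leq; rewrite Delta_le (leq_trans delta_le2).
Qed.

End Delta.

Theorem theorem6p3 (C : zmodType) (g4 : C -> nat)
  (g4_eq0 : forall x : C, g4 x = 0%N <-> x = 0)
  (g4_opp : forall x : C, g4 (- x) = g4 x)
  (g4_add : forall x y : C, (g4 (x + y)%R <= g4 x + g4 y)%N)
  (K J : C) (HK : K != 0) (HJ : J != 0) :
  (Delta g4 K J = 1%N <-> delta g4 K J = 1%N) /\
  (delta g4 K J = 2%N -> Delta g4 K J = 2%N).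
Proof.
have Delta_small := Delta_eq_delta_leq2 g4_eq0 HK HJ.
split; last by move=> d2; rewrite Delta_small d2.
by split; [exact: Delta_eq1 | move=> d1; rewrite Delta_small d1].
Qed.
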